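(* Let $\mathcal{G}=(\mathcal{V},\mathcal{E})$ be a finite directed acyclic computational graph with input edges $\mathrm{in}_1,\dots,\mathrm{in}_k\in\mathcal{E}$ (each leaving a dummy source node) and a single output edge $\mathrm{out}\in\mathcal{E}$ (entering a dummy sink node). Each non-dummy node $v$ computes a scaled op: for a differentiable map $f_v$ of its incoming-edge values $(x_{v,u})_{(u,v)\in\mathcal{E}}$ with one vector output per outgoing edge, the node's forward map is $f^*_v=\alpha_v f_v$ and its backward map is $f^*_{\mathrm{grad},v}(x,(g_w)_w)_u=\beta_{v,u}\sum_{w:(v,w)\in\mathcal{E}}g_w^\top\frac{\partial f_v(x)_w}{\partial x_{v,u}}$, with nonzero scalars $\alpha_v,\beta_{v,u}$. Assume $\mathcal{G}$ is constraint-scaled: $\beta_{v,u}=\alpha_v$ for every edge $(u,v)$ that is not a cut-edge. Define forward values $z(\mathrm{in}_i)=x_i$, $z((u,v))=f^*_u(\{z((w,u))\})_v$, and let $F(x_1,\dots,x_k)=z(\mathrm{out})$. Define backward values $h(\mathrm{out})=g$, $h((u,v))=f^*_{\mathrm{grad},v}(\{z((u',v))\},\{h((v,r))\})_u$. Then for every $i$, every $x$ and every $g$, $$h(\mathrm{in}_i)=\beta_i\; g^\top\frac{\partial F(x_1,\dots,x_k)}{\partial x_i},\qquad \beta_i=\prod_{(u,v)\in\mathcal{E}^{\mathrm{cut}}(\mathrm{in}_i)}\frac{\beta_{v,u}}{\alpha_v},$$ where $\mathcal{E}^{\mathrm{cut}}(\mathrm{in}_i)$ is the set of edges $(u,v)$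 whose removal leaves no (undirected) path between the source node of $\mathrm{in}_i$ and the source node of $\mathrm{out}$. In particular the graph represents a scaled op (forward $F$, backward scales $\beta_i$).
   Context: A cut-edge of $\mathcal{G}$ is an edge whose removal disconnects the underlying undirected graph (a bridge). For an edge $(u,v)$, $x_{v,u}$ denotes the input of node $v$ carried by that edge, and $f_u(\dots)_v$ denotes node $u$'s output on edge $(u,v)$. All outputs of a node share the single forward scale $\alpha_v$. *)

From HB Require Import structures.
From mathcomp Require Import all_boot all_order all_algebra.
From mathcomp Require Import all_classical all_reals all_analysis.
Set Implicit Arguments. Unset Strict Implicit. Unset Printing Implicit Defensive.
Import Order.TTheory GRing.Theory Num.Theory.
Import numFieldNormedType.Exports.
Local Open Scope ring_scope.

Definition acyclic N (adj : rel 'I_N) : Prop :=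
  forall u v, adj u v -> ~~ connect adj v u.

Definition rem_edge N (adj : rel 'I_N) (a b : 'I_N) : rel 'I_N :=
  fun x y => (adj x y && ((x, y) != (a, b))) || (adj y x && ((y, x) != (a, b))).

Definition is_bridge N (adj : rel 'I_N) (u v : 'I_N) : bool :=
  ~~ connect (rem_edge adj u v) u v.

Definition cut_set N (adj : rel 'I_N) (p q : 'I_N) : {set 'I_N * 'I_N} :=
  [set e | adj e.1 e.2 && ~~ connect (rem_edge adj e.1 e.2) p q].

Definition nondummy N k (s : 'I_k -> 'I_N) (t v : 'I_N) : bool :=
  (v != t) && [forall i, s i != v].

(* A family of vectors (x_u)_{u < N}, x_u : 'rV_(p u), is represented by the
   concatenated row vector \mxrow_u x_u : 'rV_(\sum_u p u); block u is
   recovered with submxrow. *)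

Definition blkdir (R : realType) N (p : 'I_N -> nat) (u : 'I_N) (j : 'I_(p u))
  : 'rV[R]_(\sum_(u' < N) p u') :=
  \mxrow_(u' < N) \row_(j' < p u') ((u' == u) && (val j' == val j))%:R.

(* g^T (d phi(x) / d x_u) : the row vector whose j-th entry is
   sum_l g_l * d phi(x)_l / d (x_u)_j *)
Definition vjpblk (R : realType) N (p : 'I_N -> nat) m
  (phi : 'rV[R]_(\sum_(u' < N) p u') -> 'rV[R]_m)
  (x : 'rV[R]_(\sum_(u' < N) p u')) (u : 'I_N) (g : 'rV[R]_m) : 'rV[R]_(p u) :=
  \row_(j < p u) \sum_(l < m) g 0 l * (derive phi x (@blkdir R N p u j)) 0 l.

From HB Require Import structures.
From mathcomp Require Import all_boot all_order all_algebra.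
From mathcomp Require Import all_classical all_reals all_analysis.
From mathcomp Require Import ring.
Import Order.TTheory GRing.Theory Num.Theory.
Import numFieldNormedType.Exports.
Local Open Scope ring_scope.

(* Fix an input i and a basis direction d of that input.  For every edge
   (u, v) let T(u, v) = <h(u, v), D_d z(u, v)> pair the backward value with
   the forward tangent along d.  The chain rule at a non-dummy node v, where
   f*_v = alpha_v f_v and the backward map carries the weights beta_{v,u},
   gives the balance law
        sum_u T(u, v) * alpha_v / beta_{v,u}  =  sum_w T(v, w).
   Weight each node v by lam(v), the product of beta/alpha over the cut-edges
   separating s_i from v.  Along an edge (u, v) reachable from s_i,
   lam(v) = lam(u) * beta_{v,u} / alpha_v: a bridge enlarges the cut set by
   (u, v), and a non-bridge has beta_{v,u} = alpha_v.  Edges not reachable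
   from s_i carry a zero tangent.  Summing the weighted balance laws over all
   nodes therefore telescopes to T(s_i, a_i) = lam(o) T(o, t), which is the
   claimed entry of h(s_i, a_i). *)

Set Implicit Arguments.
Unset Strict Implicit.

Section CutSets.
Variables (N : nat) (adj : rel 'I_N).
Hypothesis dag : acyclic adj.

Lemma rem_edge_sym a b : symmetric (rem_edge adj a b).
Proof. by move=> x y; rewrite /rem_edge orbC. Qed.

Lemma connect_rem_edge_sym a b x y :
  connect (rem_edge adj a b) x y = connect (rem_edge adj a b) y x.
Proof. exact/sym_connect_sym/rem_edge_sym. Qed.

(* A directed path into u never uses the edge (u, v) of an acyclic graph, so
   removing (u, v) keeps every ancestor of u connected to u. *)
Lemma ancestor_connect_rem_edge u v x :
  adj u v -> connect adj x u -> connect (rem_edge adj u v) x u.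
Proof.
move=> Huv /connectP [p Hp Hl].
elim: p x Hp Hl => [|z p IH] x /=; first by move=> _ ->; exact: connect0.
case/andP=> Hxz Hp Hl.
have Hzu : connect adj z u by apply/connectP; exists p.
have Hr : rem_edge adj u v x z.
  rewrite /rem_edge Hxz /=; apply/orP; left.
  by apply: contraTneq Hzu => -[_ ->]; apply: dag.
exact: connect_trans (connect1 Hr) (IH _ Hp Hl).
Qed.

Lemma connect_rem_other_edge u v (e : 'I_N * 'I_N) x :
  adj u v -> e != (u, v) ->
  connect (rem_edge adj e.1 e.2) x u = connect (rem_edge adj e.1 e.2) x v.
Proof.
move=> Huv He.
have Hr : rem_edge adj e.1 e.2 u v.
  by rewrite /rem_edge Huv /=; apply/orP; left; rewrite eq_sym; case: e He.
apply/idP/idP => H; first exact: connect_trans H (connect1 Hr).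
by apply: connect_trans H (connect1 _); rewrite rem_edge_sym.
Qed.

Section Step.
Variables (p u v : 'I_N).
Hypotheses (Huv : adj u v) (Hpu : connect adj p u).

Lemma cut_set_off_edge e : e != (u, v) ->
  (e \in cut_set adj p v) = (e \in cut_set adj p u).
Proof. by move=> He; rewrite !inE (connect_rem_other_edge p Huv He). Qed.

Lemma in_edge_notin_cut_set : (u, v) \notin cut_set adj p u.
Proof. by rewrite inE /= ancestor_connect_rem_edge ?andbF. Qed.

Lemma cut_set_bridge : is_bridge adj u v ->
  cut_set adj p v = (u, v) |: cut_set adj p u.
Proof.
move=> Hb; apply/setP => e; rewrite in_setU1.
have [->|He] /= := eqVneq e (u, v); last exact: cut_set_off_edge.
rewrite inE /= Huv /=; apply: contraNN Hb => Hpv.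
apply: connect_trans Hpv; rewrite connect_rem_edge_sym.
exact: ancestor_connect_rem_edge.
Qed.

Lemma cut_set_nonbridge : ~~ is_bridge adj u v ->
  cut_set adj p v = cut_set adj p u.
Proof.
move=> /negbNE Hb; apply/setP => e.
have [->|He] := eqVneq e (u, v); last exact: cut_set_off_edge.
rewrite (negbTE in_edge_notin_cut_set) inE /= Huv /=.
by rewrite (connect_trans (ancestor_connect_rem_edge Huv Hpu) Hb).
Qed.

End Step.

Lemma dag_ind (P : 'I_N -> Prop) :
  (forall u, (forall w, adj w u -> P w) -> P u) -> forall u, P u.
Proof.
move=> IH.
suff H c u : (#|[pred w | connect adj w u]| < c)%N -> P u by move=> u; exact: H.
elim: c u => [//|c IHc] u; rewrite ltnS => Hu; apply: IH => w Hwu; apply: IHc.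
apply: (leq_trans _ Hu); apply: proper_card; apply/properP; split.
  by apply/fintype.subsetP => x; rewrite !inE => Hx; exact: connect_trans Hx (connect1 Hwu).
by exists u; rewrite !inE ?connect0 //; exact: dag.
Qed.

End CutSets.

Section Dummies.
Variables (N k : nat) (s : 'I_k -> 'I_N) (t : 'I_N).

Lemma node_cases u : nondummy s t u \/ u = t \/ exists i, u = s i.
Proof.
rewrite /nondummy; have [->|_] := eqVneq u t; first by right; left.
have [|/forallPn [i /negPn /eqP <-]] := boolP [forall i, s i != u]; first by left.
by right; right; exists i.
Qed.

Lemma nondummy_neq_s u i : nondummy s t u -> (u == s i) = false.
Proof. by case/andP=> _ /forallP H; apply/negbTE; rewrite eq_sym. Qed.

Lemma nondummy_neq_t u : nondummy s t u -> (u == t) = false.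
Proof. by case/andP=> /negbTE. Qed.

Lemma nondummy_s i : nondummy s t (s i) = false.
Proof.
apply/negbTE; rewrite negb_and negb_forall; apply/orP; right.
by apply/existsP; exists i; rewrite eqxx.
Qed.

Lemma nondummy_t : nondummy s t t = false.
Proof. by rewrite /nondummy eqxx. Qed.

End Dummies.

Section BlockCalculus.
Variable R : realType.

Lemma rV_dim0 m (x : 'rV[R]_m) : m = 0%N -> x = 0.
Proof. by move=> m0; move: x; rewrite m0 => x; rewrite thinmx0. Qed.

Lemma sum_dim0 m (F : 'I_m -> R) : m = 0%N -> \sum_(l < m) F l = 0.
Proof. by move=> m0; move: F; rewrite m0 => F; rewrite big_ord0. Qed.

Lemma sum2_pick N (F : 'I_N -> 'I_N -> R) p q :
  \sum_(u < N) \sum_(v < N) (if (u == p) && (v == q) then F u v else 0) = F p q.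
Proof.
rewrite (bigD1 p) //= [X in _ + X]big1 => [|u Hu]; last first.
  by apply: big1 => v _; rewrite (negbTE Hu).
rewrite addr0 (bigD1 q) //= [X in _ + X]big1 => [|v Hv]; first by rewrite !eqxx addr0.
by rewrite eqxx (negbTE Hv).
Qed.

Variable V : normedModType R.

Lemma differentiable_mx_entries p q (M : V -> 'M[R]_(p, q)) x :
  (forall i j, differentiable (fun y => M y i j) x) -> differentiable M x.
Proof.
move=> dM.
have -> : M = \sum_(i < p) \sum_(j < q) (fun y => M y i j *: delta_mx i j).
  apply/funext => y; rewrite fct_sumE [LHS]matrix_sum_delta.
  by apply: eq_bigr => i _; rewrite fct_sumE.
apply: differentiable_sum => i; apply: differentiable_sum => j.
exact: differentiableZl.
Qed.

Lemma differentiable_entry p q (M : V -> 'M[R]_(p, q)) x i j :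
  differentiable M x -> differentiable (fun y => M y i j) x.
Proof.
move=> dM; apply: (differentiable_comp (g := fun A : 'M[R]_(p, q) => A i j)) => //.
exact: differentiable_coord.
Qed.

Lemma derive_entry p q (M : V -> 'M[R]_(p, q)) x v i j :
  differentiable M x -> 'D_v M x i j = 'D_v (fun y => M y i j) x.
Proof. by move=> dM; rewrite derive_mx ?mxE //; exact: diff_derivable. Qed.

Lemma differentiable_submxrow q (q_ : 'I_q -> nat) m
    (G : V -> 'M[R]_(m, \sum_(w < q) q_ w)) x w :
  differentiable G x -> differentiable (fun y => submxrow (G y) w) x.
Proof.
move=> dG; apply: differentiable_mx_entries => i l.
rewrite (_ : (fun y => _) = (fun y => G y i (tagnat.Rank w l))).
  exact: differentiable_entry.
by apply/funext => y; rewrite mxE.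
Qed.

Lemma differentiable_mxrow q (q_ : 'I_q -> nat) m
    (G : forall w, V -> 'M[R]_(m, q_ w)) x :
  (forall w, differentiable (G w) x) -> differentiable (fun y => \mxrow_w G w y) x.
Proof.
move=> dG; apply: differentiable_mx_entries => i l.
rewrite (_ : (fun y => _) = (fun y => G (tagnat.sig1 l) y i (tagnat.sig2 l))).
  exact: differentiable_entry.
by apply/funext => y; rewrite mxE.
Qed.

Lemma derive_submxrow q (q_ : 'I_q -> nat) m
    (G : V -> 'M[R]_(m, \sum_(w < q) q_ w)) x w d :
  differentiable G x -> 'D_d (fun y => submxrow (G y) w) x = submxrow ('D_d G x) w.
Proof.
move=> dG; apply/matrixP => i l.
rewrite derive_entry; last exact: differentiable_submxrow.
rewrite [RHS]mxE derive_entry //; congr ('D_d _ x).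
by apply/funext => y; rewrite mxE.
Qed.

Lemma derive_mxrow q (q_ : 'I_q -> nat) m
    (G : forall w, V -> 'M[R]_(m, q_ w)) x d :
  (forall w, differentiable (G w) x) ->
  'D_d (fun y => \mxrow_w G w y) x = \mxrow_w 'D_d (G w) x.
Proof.
move=> dG; apply/matrixP => i l.
rewrite derive_entry; last exact: differentiable_mxrow.
rewrite [RHS]mxE derive_entry //; congr ('D_d _ x).
by apply/funext => y; rewrite mxE.
Qed.

Lemma derive_scale (U : normedModType R) (G : V -> U) (c : R) x d :
  differentiable G x -> 'D_d (fun y => c *: G y) x = c *: 'D_d G x.
Proof. by move=> dG; rewrite -deriveZ //; exact: diff_derivable. Qed.

Lemma derive_chain (U W : normedModType R) (G : V -> U) (F : U -> W) x d :
  differentiable G x -> differentiable F (G x) ->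
  'D_d (F \o G) x = 'D_('D_d G x) F (G x).
Proof.
move=> dG dF; rewrite !deriveE //; last exact: differentiable_comp.
by rewrite diff_comp.
Qed.

End BlockCalculus.

Lemma submxrow_blkdir (R : realType) N (p : 'I_N -> nat) u j w :
  submxrow (@blkdir R N p u j) w = \row_(l < p w) ((w == u) && (val l == val j))%:R.
Proof. by rewrite /blkdir mxrowK. Qed.

Lemma mxrow_blkdir (R : realType) N (p : 'I_N -> nat) (D : forall u, 'rV[R]_(p u)) :
  \mxrow_(u < N) D u = \sum_(u < N) \sum_(l < p u) D u 0 l *: @blkdir R N p u l.
Proof.
apply/matrixP => i0 c; rewrite !mxE summxE (bigD1 (tagnat.sig1 c)) //=.
rewrite [X in _ + X]big1 ?addr0; last first.
  move=> u Hu; rewrite summxE big1 // => l _; rewrite !mxE.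
  by rewrite eq_sym (negbTE Hu) /= mulr0.
rewrite summxE (bigD1 (tagnat.sig2 c)) //= [X in _ + X]big1 ?addr0; last first.
  move=> l Hl; rewrite !mxE eqxx /=.
  by rewrite (_ : (_ == _) = false) ?mulr0 //; apply: contraNF Hl => /eqP/val_inj ->.
by rewrite !mxE !eqxx mulr1 (ord1 i0).
Qed.

Lemma derive_mxrow_blkdir (R : realType) (W : normedModType R) N (p : 'I_N -> nat)
    (D : forall u, 'rV[R]_(p u)) (F : 'rV[R]_(\sum_(u < N) p u) -> W) x :
  differentiable F x ->
  'D_(\mxrow_(u < N) D u) F x =
    \sum_(u < N) \sum_(l < p u) D u 0 l *: 'D_(@blkdir R N p u l) F x.
Proof.
move=> dF; rewrite mxrow_blkdir deriveE // linear_sum; apply: eq_bigr => u _.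
by rewrite linear_sum; apply: eq_bigr => l _; rewrite linearZ deriveE.
Qed.

Unset Implicit Arguments.

Section Backpropagation.
Variables (R : realType) (N : nat) (adj : rel 'I_N)
  (k : nat) (s a : 'I_k -> 'I_N) (o t : 'I_N)
  (n : 'I_N -> 'I_N -> nat)
  (f : forall v : 'I_N, 'rV[R]_(\sum_(u < N) n u v) -> 'rV[R]_(\sum_(w < N) n v w))
  (alpha : 'I_N -> R) (beta : 'I_N -> 'I_N -> R).
Hypothesis dag : acyclic adj.
Hypothesis dim_nonedge : forall u v, ~~ adj u v -> n u v = 0%N.
Hypothesis s_inj : injective s.
Hypothesis s_out : forall i w, adj (s i) w = (w == a i).
Hypothesis s_in : forall i u, ~~ adj u (s i).
Hypothesis t_in : forall u, adj u t = (u == o).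
Hypothesis t_out : forall w, ~~ adj t w.
Hypothesis f_diff : forall v, nondummy s t v -> forall x, differentiable (f v) x.
Hypothesis alpha_neq0 : forall v, nondummy s t v -> alpha v != 0.
Hypothesis beta_neq0 : forall u v, adj u v -> nondummy s t v -> beta v u != 0.
Hypothesis beta_nonbridge : forall u v, adj u v -> nondummy s t v ->
  ~~ is_bridge adj u v -> beta v u = alpha v.

Local Notation inputs := 'rV[R]_(\sum_(i < k) n (s i) (a i)).

Variable Z : inputs -> forall u v : 'I_N, 'rV[R]_(n u v).
Hypothesis Z_input : forall X i, Z X (s i) (a i) = submxrow X i.
Hypothesis Z_node : forall X u v, adj u v -> nondummy s t u ->
  Z X u v = alpha u *: submxrow (f u (\mxrow_(w < N) Z X w u)) v.

Local Notation node_in u Y := (\mxrow_(w < N) Z Y w u).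

Lemma Z_nonedge u v : ~~ adj u v -> (fun Y => Z Y u v) = cst 0.
Proof. by move=> Huv; apply/funext => Y; apply: rV_dim0; exact: dim_nonedge. Qed.

Lemma Z_differentiable u v (Y : inputs) : differentiable (fun X => Z X u v) Y.
Proof.
elim/(dag_ind dag): u v Y => u IH v Y.
have [Huv|Huv] := boolP (adj u v); last by rewrite Z_nonedge //; exact: differentiable_cst.
have [Hu|[Hu|[i Hu]]] := node_cases s t u.
- rewrite (_ : (fun X => Z X u v) = fun X => alpha u *: submxrow (f u (node_in u X)) v);
    last by apply/funext => X; rewrite Z_node.
  apply: differentiableZ; apply: differentiable_submxrow.
  apply: (differentiable_comp (f := fun X => node_in u X) (g := f u)); last exact: f_diff.
  apply: differentiable_mxrow => w /=; have [/IH //|Hwu] := boolP (adj w u).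
  by rewrite Z_nonedge //; exact: differentiable_cst.
- by move: Huv; rewrite Hu (negbTE (t_out _)).
- move: Huv; rewrite Hu s_out => /eqP ->.
  rewrite (_ : (fun X => Z X (s i) (a i)) = fun X => submxrow (id X) i);
    last by apply/funext => X; rewrite Z_input.
  exact: differentiable_submxrow.
Qed.

Section Tangents.
Variable X : inputs.

Definition tangent (d : inputs) u v : 'rV[R]_(n u v) := 'D_d (fun Y => Z Y u v) X.

Lemma tangent_nonedge d u v : ~~ adj u v -> tangent d u v = 0.
Proof. by move=> Huv; rewrite /tangent Z_nonedge ?derive_cst. Qed.

Lemma tangent_input d i : tangent d (s i) (a i) = submxrow d i.
Proof.
rewrite /tangent (_ : (fun Y => Z Y (s i) (a i)) = fun Y => submxrow (id Y) i);
  last by apply/funext => Y; rewrite Z_input.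
by rewrite derive_submxrow ?derive_id.
Qed.

Lemma tangent_node d u v : adj u v -> nondummy s t u ->
  tangent d u v = alpha u *: submxrow ('D_(\mxrow_w tangent d w u) (f u) (node_in u X)) v.
Proof.
move=> Huv Hu; rewrite /tangent.
rewrite (_ : (fun Y => Z Y u v) = fun Y => alpha u *: submxrow (f u (node_in u Y)) v);
  last by apply/funext => Y; rewrite Z_node.
have dP : differentiable (fun Y => node_in u Y) X.
  by apply: differentiable_mxrow => w; exact: Z_differentiable.
have dF : differentiable (f u \o (fun Y => node_in u Y)) X.
  by apply: differentiable_comp => //; exact: f_diff.
rewrite derive_scale; last exact: differentiable_submxrow.
rewrite (derive_submxrow _ _ dF) (derive_chain _ dP); last exact: f_diff.
by rewrite derive_mxrow // => w; exact: Z_differentiable.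
Qed.

Lemma tangent_unreachable d i : (forall i', i' != i -> submxrow d i' = 0) ->
  forall u, ~~ connect adj (s i) u -> forall v, tangent d u v = 0.
Proof.
move=> d_supp; elim/(dag_ind dag) => u IH Hcon v.
have [Huv|Huv] := boolP (adj u v); last exact: tangent_nonedge.
have [Hu|[Hu|[i' Hu]]] := node_cases s t u.
- have in0 w : tangent d w u = 0.
    have [Hwu|Hwu] := boolP (adj w u); last exact: tangent_nonedge.
    apply: IH => //; apply: contraNN Hcon => Hc.
    exact: connect_trans Hc (connect1 Hwu).
  rewrite tangent_node // (_ : \mxrow_w tangent d w u = 0) ?derive0 ?submxrow0 ?scaler0 //.
  by apply/matrixP => i0 l; rewrite !mxE in0 mxE.
- by move: Huv; rewrite Hu (negbTE (t_out _)).
- move: Huv Hcon; rewrite Hu s_out => /eqP -> Hcon.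
  by rewrite tangent_input d_supp //; apply: contraNneq Hcon => ->; exact: connect0.
Qed.

Variable h : forall u v : 'I_N, 'rV[R]_(n u v).
Hypothesis h_node : forall u v, adj u v -> nondummy s t v ->
  h u v = beta v u *: \sum_(w < N | adj v w)
            vjpblk (fun y => submxrow (f v y) w) (node_in v X) u (h v w).

Definition pairing d u v : R := \sum_(l < n u v) h u v 0 l * tangent d u v 0 l.

Definition node_jacobian v u (l : 'I_(n u v)) :=
  'D_(@blkdir R N (fun u' => n u' v) u l) (f v) (node_in v X).

Lemma pairing_nonedge d u v : ~~ adj u v -> pairing d u v = 0.
Proof. by move=> Huv; apply: sum_dim0; exact: dim_nonedge. Qed.

Lemma h_node_entry u v l : adj u v -> nondummy s t v ->
  h u v 0 l = beta v u * \sum_(w < N) \sum_(m < n v w)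
                h v w 0 m * node_jacobian v u l 0 (tagnat.Rank w m).
Proof.
move=> Huv Hv; rewrite h_node // !mxE summxE [in RHS](bigID (adj v)) /=.
rewrite [X in _ + X]big1 ?addr0 => [|w /dim_nonedge nvw]; last exact: sum_dim0.
congr (_ * _); apply: eq_bigr => w _; rewrite mxE; apply: eq_bigr => m _.
by rewrite derive_submxrow ?mxE //; exact: f_diff.
Qed.

(* Both sides of the balance law are the same double sum over the Jacobian
   of f_v, weighted by incoming tangents and outgoing backward values. *)
Lemma pairing_in_edge d u v : nondummy s t v ->
  pairing d u v / (beta v u / alpha v) =
  alpha v * \sum_(l < n u v) tangent d u v 0 l *
    \sum_(w < N) \sum_(m < n v w) h v w 0 m * node_jacobian v u l 0 (tagnat.Rank w m).
Proof.
move=> Hv; have [Huv|Huv] := boolP (adj u v); last first.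
  by rewrite pairing_nonedge // mul0r sum_dim0 ?mulr0 ?dim_nonedge.
have -> : pairing d u v = beta v u * \sum_(l < n u v) tangent d u v 0 l *
    \sum_(w < N) \sum_(m < n v w) h v w 0 m * node_jacobian v u l 0 (tagnat.Rank w m).
  rewrite /pairing mulr_sumr; apply: eq_bigr => l _.
  by rewrite h_node_entry // mulrAC -mulrA.
have Hb := beta_neq0 _ _ Huv Hv; have Ha := alpha_neq0 _ Hv.
by field; rewrite Hb Ha.
Qed.

Lemma pairing_out_edge d v w : nondummy s t v ->
  pairing d v w = alpha v * \sum_(m < n v w) h v w 0 m *
    \sum_(u < N) \sum_(l < n u v) tangent d u v 0 l * node_jacobian v u l 0 (tagnat.Rank w m).
Proof.
move=> Hv; have [Hvw|Hvw] := boolP (adj v w); last first.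
  by rewrite pairing_nonedge // sum_dim0 ?mulr0 ?dim_nonedge.
rewrite /pairing mulr_sumr; apply: eq_bigr => m _.
rewrite tangent_node // derive_mxrow_blkdir; last exact: f_diff.
rewrite !mxE summxE mulrCA; congr (_ * (_ * _)).
by apply: eq_bigr => u _; rewrite summxE; apply: eq_bigr => l _; rewrite !mxE.
Qed.

Lemma node_balance d v : nondummy s t v ->
  \sum_(u < N) pairing d u v / (beta v u / alpha v) = \sum_(w < N) pairing d v w.
Proof.
move=> Hv; under eq_bigr do rewrite pairing_in_edge //.
under [RHS]eq_bigr do rewrite pairing_out_edge //.
rewrite -!mulr_sumr; congr (_ * _).
transitivity (\sum_(u < N) \sum_(w < N) \sum_(l < n u v) \sum_(m < n v w)
    tangent d u v 0 l * (h v w 0 m * node_jacobian v u l 0 (tagnat.Rank w m))).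
  apply: eq_bigr => u _; rewrite [RHS]exchange_big; apply: eq_bigr => l _.
  by rewrite mulr_sumr; apply: eq_bigr => w _; rewrite mulr_sumr.
rewrite exchange_big; apply: eq_bigr => w _.
transitivity (\sum_(u < N) \sum_(m < n v w) \sum_(l < n u v)
    tangent d u v 0 l * (h v w 0 m * node_jacobian v u l 0 (tagnat.Rank w m))).
  by apply: eq_bigr => u _; rewrite exchange_big.
rewrite exchange_big; apply: eq_bigr => m _.
rewrite mulr_sumr; apply: eq_bigr => u _.
by rewrite mulr_sumr; apply: eq_bigr => l _; rewrite mulrCA.
Qed.

Definition cut_scale i v := \prod_(e in cut_set adj (s i) v) (beta e.2 e.1 / alpha e.2).

Lemma cut_scale_source i : cut_scale i (s i) = 1.
Proof.
rewrite /cut_scale (_ : cut_set _ _ _ = finset.set0) ?big_set0 //.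
by apply/setP => e; rewrite !inE connect0 andbF.
Qed.

Lemma cut_scale_step i u v : adj u v -> nondummy s t v -> connect adj (s i) u ->
  cut_scale i v = cut_scale i u * (beta v u / alpha v).
Proof.
move=> Huv Hv Hc; rewrite /cut_scale; have [Hb|Hb] := boolP (is_bridge adj u v).
  rewrite (cut_set_bridge dag Huv Hc Hb) big_setU1 /= 1?mulrC //.
  exact: in_edge_notin_cut_set.
by rewrite (cut_set_nonbridge dag Huv Hc Hb) beta_nonbridge // divff ?mulr1 ?alpha_neq0.
Qed.

Section Direction.
Variables (i : 'I_k) (j : 'I_(n (s i) (a i))).

Local Notation d := (@blkdir R k (fun i' => n (s i') (a i')) i j).

Lemma direction_other_input i' : i' != i -> submxrow d i' = 0.
Proof. by move=> /negbTE Hi'; apply/rowP => l; rewrite submxrow_blkdir !mxE Hi'. Qed.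

Lemma pairing_other_input i' : i' != i -> pairing d (s i') (a i') = 0.
Proof.
by move=> Hi'; apply: big1 => l _; rewrite tangent_input direction_other_input ?mxE ?mulr0.
Qed.

Lemma pairing_input : pairing d (s i) (a i) = h (s i) (a i) 0 j.
Proof.
rewrite /pairing tangent_input submxrow_blkdir (bigD1 j) //= big1 => [|l Hl].
  by rewrite !mxE !eqxx mulr1 addr0.
by rewrite !mxE eqxx /= (_ : (_ == _) = false) ?mulr0 //; apply: contraNF Hl => /eqP/val_inj ->.
Qed.

Lemma edge_balance u v : adj u v -> nondummy s t v ->
  cut_scale i v * (pairing d u v / (beta v u / alpha v)) = cut_scale i u * pairing d u v.
Proof.
move=> Huv Hv; have [Hc|Hc] := boolP (connect adj (s i) u).
  rewrite (cut_scale_step i u v Huv Hv Hc).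
  have Hb := beta_neq0 _ _ Huv Hv; have Ha := alpha_neq0 _ Hv.
  by field; rewrite Hb Ha.
have -> : pairing d u v = 0.
  apply: big1 => l _; rewrite (tangent_unreachable d i direction_other_input u Hc v) mxE.
  exact: mulr0.
by rewrite !mul0r !mulr0.
Qed.

Lemma edge_defect u v :
  (if nondummy s t v then cut_scale i v * (pairing d u v / (beta v u / alpha v)) else 0) -
  (if nondummy s t u then cut_scale i u * pairing d u v else 0) =
  (if (u == s i) && (v == a i) then (if nondummy s t v then pairing d u v else 0) else 0) -
  (if (u == o) && (v == t) then (if nondummy s t u then cut_scale i u * pairing d u v else 0)
   else 0).
Proof.
have [Huv|Huv] := boolP (adj u v); last first.
  have -> : (u == s i) && (v == a i) = false.
    by apply: contraNF Huv => /andP [/eqP -> /eqP ->]; rewrite s_out.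
  have -> : (u == o) && (v == t) = false.
    by apply: contraNF Huv => /andP [/eqP -> /eqP ->]; rewrite t_in.
  by rewrite pairing_nonedge // !mul0r !mulr0 !if_same subrr.
have [Hv|[Hv|[i' Hv]]] := node_cases s t v; last by move: Huv; rewrite Hv (negbTE (s_in _ _)).
  rewrite Hv edge_balance // (nondummy_neq_t Hv) andbF /= subr0.
  have [Hu|[Hu|[i' Hu]]] := node_cases s t u.
  - by rewrite Hu (nondummy_neq_s _ Hu) /= subrr.
  - by move: Huv; rewrite Hu (negbTE (t_out _)).
  move: Huv; rewrite Hu s_out => /eqP ->.
  rewrite nondummy_s /= subr0 (inj_eq s_inj).
  have [->|Hi'] := eqVneq i' i; first by rewrite !eqxx /= cut_scale_source mul1r.
  by rewrite /= pairing_other_input // mulr0.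
move: Huv; rewrite Hv t_in => /eqP ->.
by rewrite nondummy_t !eqxx /= if_same.
Qed.

Lemma telescoping :
  (if nondummy s t (a i) then pairing d (s i) (a i) else 0) =
  (if nondummy s t o then cut_scale i o * pairing d o t else 0).
Proof.
have E1 := sum2_pick (fun u v => if nondummy s t v then pairing d u v else 0) (s i) (a i).
have E2 := sum2_pick
  (fun u v => if nondummy s t u then cut_scale i u * pairing d u v else 0) o t.
rewrite /= in E1 E2; apply/eqP; rewrite -subr_eq0 -E1 -E2 -sumrB; apply/eqP.
transitivity (\sum_(u < N) \sum_(v < N)
   ((if nondummy s t v then cut_scale i v * (pairing d u v / (beta v u / alpha v)) else 0) -
    (if nondummy s t u then cut_scale i u * pairing d u v else 0))).
  by apply: eq_bigr => u _; rewrite -sumrB; apply: eq_bigr => v _; rewrite edge_defect.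
under eq_bigr do rewrite sumrB.
rewrite sumrB [X in X - _]exchange_big /=; apply/eqP; rewrite subr_eq0; apply/eqP.
apply: eq_bigr => v _; have [Hv|_] := boolP (nondummy s t v); last by rewrite !big1.
by rewrite -!mulr_sumr node_balance.
Qed.

Lemma input_target_cases : nondummy s t (a i) \/ (o = s i /\ t = a i).
Proof.
have Hsa : adj (s i) (a i) by rewrite s_out.
have [Ha|[Ha|[i' Ha]]] := node_cases s t (a i); first by left.
  by right; move: Hsa; rewrite Ha t_in => /eqP ->.
by have := s_in i' (s i); rewrite -Ha Hsa.
Qed.

Lemma pairing_input_output : h (s i) (a i) 0 j = cut_scale i o * pairing d o t.
Proof.
have [Ha|[-> ->]] := input_target_cases; last by rewrite cut_scale_source mul1r pairing_input.
have := telescoping; rewrite Ha /= pairing_input => ->.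
have Hot : adj o t by rewrite t_in.
have [Ho|[Ho|[i' Ho]]] := node_cases s t o; first by rewrite Ho.
  by move: Hot; rewrite Ho (negbTE (t_out _)).
have [Hi'|Hi'] := eqVneq i' i.
  by move: Hot Ha; rewrite Ho Hi' s_out => /eqP <-; rewrite nondummy_t.
have Ht : t = a i' by move: Hot; rewrite Ho s_out => /eqP.
by rewrite Ho nondummy_s /= Ht pairing_other_input // mulr0.
Qed.

End Direction.

Lemma backprop_correct :
  differentiable (fun Y => Z Y o t) X /\
  forall i, h (s i) (a i) = cut_scale i o *: vjpblk (fun Y => Z Y o t) X i (h o t).
Proof.
split; first exact: Z_differentiable.
by move=> i; apply/rowP => j; rewrite pairing_input_output !mxE.
Qed.

End Tangents.
End Backpropagation.

Theorem mainTheorem3 (R : realType) (N : nat) (adj : rel 'I_N)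
  (k : nat) (s a : 'I_k -> 'I_N) (o t : 'I_N)
  (n : 'I_N -> 'I_N -> nat)
  (f : forall v : 'I_N, 'rV[R]_(\sum_(u < N) n u v) -> 'rV[R]_(\sum_(w < N) n v w))
  (alpha : 'I_N -> R) (beta : 'I_N -> 'I_N -> R) :
  acyclic adj ->
  (forall u v, ~~ adj u v -> n u v = 0%N) ->
  injective s ->
  (forall i, s i != t) ->
  (forall i w, adj (s i) w = (w == a i)) ->
  (forall i u, ~~ adj u (s i)) ->
  (forall u, adj u t = (u == o)) ->
  (forall w, ~~ adj t w) ->
  (forall v, nondummy s t v -> forall x, differentiable (f v) x) ->
  (forall v, nondummy s t v -> alpha v != 0) ->
  (forall u v, adj u v -> nondummy s t v -> beta v u != 0) ->
  (forall u v, adj u v -> nondummy s t v -> ~~ is_bridge adj u v ->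
     beta v u = alpha v) ->
  forall Z : 'rV[R]_(\sum_(i < k) n (s i) (a i)) -> forall u v : 'I_N, 'rV[R]_(n u v),
  (forall X i, Z X (s i) (a i) = submxrow X i) ->
  (forall X u v, adj u v -> nondummy s t u ->
     Z X u v = alpha u *: submxrow (f u (\mxrow_(w < N) Z X w u)) v) ->
  forall (X : 'rV[R]_(\sum_(i < k) n (s i) (a i))) (g : 'rV[R]_(n o t))
         (h : forall u v : 'I_N, 'rV[R]_(n u v)),
  h o t = g ->
  (forall u v, adj u v -> nondummy s t v ->
     h u v = beta v u *: \sum_(w < N | adj v w)
               vjpblk (fun y => submxrow (f v y) w) (\mxrow_(u' < N) Z X u' v) u (h v w)) ->
  differentiable (fun Y => Z Y o t) X /\
  forall i : 'I_k,
    h (s i) (a i) =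
      (\prod_(e in cut_set adj (s i) o) (beta e.2 e.1 / alpha e.2)) *:
        vjpblk (fun Y => Z Y o t) X i g.
Proof.
move=> dag dim0 s_inj _ s_out s_in t_in t_out f_diff alpha0 beta0 beta_nb
  Z Z_in Z_nd X g h <- h_nd.
exact: (backprop_correct R N adj k s a o t n f alpha beta dag dim0 s_inj s_out s_in
  t_in t_out f_diff alpha0 beta0 beta_nb Z Z_in Z_nd X h h_nd).
Qed.
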